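(* Let $A=[a_{ij}]$ be an $n\times n$ row-stochastic matrix with positive diagonal entries, and assume the smallest positive entry of $A$ is at least $\eta>0$. Let $w_{ij}$ be the $(i,j)$-th entry of $A^TA$. Let $(S^-,S^+)$ be a partition of $N=\{1,\dots,n\}$ into two disjoint sets. If $\sum_{i\in S^-,\,j\in S^+}w_{ij}>0$, then \[\sum_{i\in S^-,\,j\in S^+}w_{ij}\ge\frac\eta2.\]
   Context: A matrix is row-stochastic if it is nonnegative and each row sums to $1$. *)

From mathcomp Require Import all_boot all_order all_algebra.
Set Implicit Arguments. Unset Strict Implicit. Unset Printing Implicit Defensive.
Import Order.TTheory GRing.Theory Num.Theory.
Local Open Scope ring_scope.

Definition row_stochastic (R : numDomainType) (n : nat) (A : 'M[R]_n) : Prop :=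
  (forall i j, 0 <= A i j) /\ (forall i, \sum_(j < n) A i j = 1).

(* Expanding A^T A, the cut weight equals sum_k s_k t_k, where s_k and t_k are the masses
   row k of A puts on S^- and on S^+.  Since s_k + t_k = 1 and every positive entry is at
   least eta, a positive product s_k t_k has min(s_k, t_k) >= eta and max(s_k, t_k) >= 1/2,
   so s_k t_k >= eta / 2; a positive cut weight has at least one positive term. *)
From mathcomp Require Import all_boot all_order all_algebra.
From mathcomp Require Import lra.
Import Order.TTheory GRing.Theory Num.Theory.
Local Open Scope ring_scope.

Lemma psumr_ge_floor (R : numDomainType) (I : finType) (P : pred I) (F : I -> R)
    (eta : R) :
  (forall i, P i -> 0 <= F i) -> (forall i, P i -> 0 < F i -> eta <= F i) ->
  0 < \sum_(i | P i) F i -> eta <= \sum_(i | P i) F i.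
Proof.
move=> F_ge0 F_floor /lt0r_neq0/eqP /(psumr_neq0P F_ge0) [i /andP[Pi Fi_gt0]].
rewrite (bigD1 i) //=; apply: le_trans (F_floor _ Pi Fi_gt0) _.
by rewrite lerDl sumr_ge0 // => j /andP[Pj _]; exact: F_ge0.
Qed.

Lemma sum_block_trmx_mul (R : comPzRingType) (m n : nat) (A : 'M[R]_(m, n))
    (S T : {pred 'I_n}) :
  \sum_(i in S) \sum_(j in T) (A^T *m A) i j =
  \sum_(k < m) (\sum_(i in S) A k i) * (\sum_(j in T) A k j).
Proof.
under eq_bigr => i _ do under eq_bigr => j _ do rewrite mxE.
under eq_bigr => i _ do rewrite exchange_big /=.
rewrite exchange_big /=; apply: eq_bigr => k _.
rewrite mulr_suml; apply: eq_bigr => i _; rewrite mulr_sumr.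
by apply: eq_bigr => j _; rewrite mxE.
Qed.

Lemma sum_setC_split (R : nmodType) (n : nat) (S : {set 'I_n}) (F : 'I_n -> R) :
  \sum_(j in S) F j + \sum_(j in ~: S) F j = \sum_(j < n) F j.
Proof.
rewrite [RHS](bigID (mem S)) /=; congr (_ + _).
by apply: eq_bigl => j; rewrite inE.
Qed.

Lemma mul_split_ge_half_floor (R : realFieldType) (s t eta : R) :
  0 <= s -> 0 <= t -> s + t = 1 -> eta <= s -> eta <= t -> eta / 2 <= s * t.
Proof. by move=> s_ge0 t_ge0 st1 eta_s eta_t; have [|] := lerP s t; nra. Qed.

Theorem lemma2 (R : realFieldType) (n : nat) (A : 'M[R]_n) (eta : R)
  (Sm : {set 'I_n}) :
  row_stochastic A ->
  (forall i, 0 < A i i) ->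
  0 < eta ->
  (forall i j, 0 < A i j -> eta <= A i j) ->
  0 < \sum_(i in Sm) \sum_(j in ~: Sm) (A^T *m A) i j ->
  eta / 2 <= \sum_(i in Sm) \sum_(j in ~: Sm) (A^T *m A) i j.
Proof.
move=> [A_ge0 A_row1] _ _ A_floor; rewrite sum_block_trmx_mul.
pose s k := \sum_(i in Sm) A k i; pose t k := \sum_(j in ~: Sm) A k j.
have s_ge0 k : 0 <= s k by exact: sumr_ge0.
have t_ge0 k : 0 <= t k by exact: sumr_ge0.
apply: (@psumr_ge_floor _ _ xpredT) => k _; rewrite -/(s k) -/(t k).
  exact: mulr_ge0.
move=> /lt0r_neq0; rewrite mulf_eq0 negb_or => /andP[s_neq0 t_neq0].
have s_gt0 : 0 < s k by rewrite lt_def s_neq0 s_ge0.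
have t_gt0 : 0 < t k by rewrite lt_def t_neq0 t_ge0.
apply: mul_split_ge_half_floor => //; first by rewrite sum_setC_split A_row1.
- by apply: psumr_ge_floor => // j _; exact: A_floor.
- by apply: psumr_ge_floor => // j _; exact: A_floor.
Qed.
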